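(* Let $(p_1,\alpha^1,\beta^1)$ and $(p_2,\alpha^2,\beta^2)$ be two equilibria with demand maps $D_1,D_2$. For $\mu$-almost every $x$ the following holds: if $D_1(x)=\{d_1(x)\}$ is a singleton, then $d_1(x)\in D_2(x)$; and if moreover $D_2(x)=\{d_2(x)\}$ is a singleton, then $d_1(x)=d_2(x)$.
   Context: Standing setting. $X\subset\mathbb R^{d_1}$, $Y\subset\mathbb R^{d_2}$, $Z_0\subset\mathbb R^{d_3}$ compact; $\mu,\nu$ finite nonnegative Borel measures on $X,Y$. $u$ continuous on a neighbourhood of $X\times Z_0$, differentiable in $x$ with $D_xu$ continuous; $v$ continuous on a neighbourhood of $Y\times Z_0$, differentiable in $y$ with $D_yv$ continuous. $Z=Z_0\cup\{\varnothing_d\}\cup\{\varnothing_s\}$ with two distinct isolated extra points; $u(x,\varnothing_d)=0$, $u(x,\varnothing_s)=-1$, $v(y,\varnothing_s)=0$, $v(y,\varnothing_d)=1$. $b(z)=\max_x u(x,z)$, $a(z)=\min_y v(y,z)$, $Z_1=\{z\in Z:a(z)\le b(z)\}$. A price system is a continuous $p:Z\to\mathbb R$ with $p(\varnothing_d)=p(\varnothing_s)=0$, admissible if $a\le p\le b$ on $Z_1$. $D(x)=\arg\max_{z\in Z}\{u(x,z)-p(z)\}$, $S(y)=\arg\min_{z\in Z}\{v(y,z)-p(z)\}$. A demand (resp. supply) distribution associated with $p$ is a positive Borel measure on $X\times Z$ (resp. $Y\times Z$) carried by the graph of $D$ (resp. $S$) with $X$-marginal $\mu$ (resp. $Y$-marginal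 $\nu$). An equilibrium is $(p,\alpha,\beta)$ with $p$ admissible, $\alpha,\beta$ associated demand and supply distributions, and equal $Z$-marginals on Borel subsets of $Z_0$. $D_i$ is the demand map for $p_i$. *)

From HB Require Import structures.
From mathcomp Require Import all_boot all_order all_algebra.
From mathcomp Require Import all_classical all_reals all_analysis.
Set Implicit Arguments. Unset Strict Implicit. Unset Printing Implicit Defensive.
Import Order.TTheory GRing.Theory Num.Theory.
Import numFieldNormedType.Exports.
Local Open Scope classical_set_scope.
Local Open Scope ring_scope.

(** The set Z = Z0 ∪ {∅_d} ∪ {∅_s}: the ambient type of "goods" consists of
    points of R^d3 (tagged Zgood) plus two distinct extra points. *)
Inductive Zpt (R : realType) (d : nat) : Type :=
  | Zgood of 'rV[R]_d | Zempty_d | Zempty_s.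
Arguments Zgood {R d}. Arguments Zempty_d {R d}. Arguments Zempty_s {R d}.

Section ZptInstances.
Variables (R : realType) (d : nat).
Definition Zpt_to (z : Zpt R d) : ('rV[R]_d + bool)%type :=
  match z with Zgood x => inl x | Zempty_d => inr true | Zempty_s => inr false end.
Definition Zpt_of (s : ('rV[R]_d + bool)%type) : Zpt R d :=
  match s with inl x => Zgood x | inr true => Zempty_d | inr false => Zempty_s end.
Lemma Zpt_toK : cancel Zpt_to Zpt_of. Proof. by case. Qed.
HB.instance Definition _ := Choice.copy (Zpt R d) (can_type Zpt_toK).
HB.instance Definition _ := isPointed.Build (Zpt R d) Zempty_d.
End ZptInstances.

Section Market.
Variables (R : realType) (d1 d2 d3 : nat).

Definition Bor (d : nat) := g_sigma_algebraType (open : set (set 'rV[R]_d)).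

Definition GZ : set (set (Zpt R d3)) :=
  [set A | (exists2 O : set 'rV[R]_d3, open O & A = Zgood @` O)
           \/ A = [set Zempty_d] \/ A = [set Zempty_s]].
Definition ZT := g_sigma_algebraType GZ.

Definition Zset (Z0 : set 'rV[R]_d3) : set (Zpt R d3) :=
  [set z | match z with Zgood z0 => Z0 z0 | _ => True end].

Definition uZ (u : 'rV[R]_d1 -> 'rV[R]_d3 -> R) (x : 'rV[R]_d1) (z : Zpt R d3) : R :=
  match z with Zgood z0 => u x z0 | Zempty_d => 0 | Zempty_s => -1 end.
Definition vZ (v : 'rV[R]_d2 -> 'rV[R]_d3 -> R) (y : 'rV[R]_d2) (z : Zpt R d3) : R :=
  match z with Zgood z0 => v y z0 | Zempty_s => 0 | Zempty_d => 1 end.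

(** b(z) = max_{x in X} u(x,z), a(z) = min_{y in Y} v(y,z)
    (written as sup / inf; for X, Y nonempty compact and u, v continuous these
    are attained). *)
Definition bfun (X : set 'rV[R]_d1) u (z : Zpt R d3) : R := sup [set uZ u x z | x in X].
Definition afun (Y : set 'rV[R]_d2) v (z : Zpt R d3) : R := inf [set vZ v y z | y in Y].

(** A price system: continuous on Z (the extra points are isolated, so this
    amounts to continuity on Z0), vanishing at ∅_d and ∅_s. *)
Definition price_system (Z0 : set 'rV[R]_d3) (p : Zpt R d3 -> R) : Prop :=
  [/\ p Zempty_d = 0, p Zempty_s = 0 &
      {within Z0, continuous (fun z0 => p (Zgood z0))}].

Definition admissible X Y Z0 u v (p : Zpt R d3 -> R) : Prop :=
  price_system Z0 p /\
  forall z, Zset Z0 z -> afun Y v z <= bfun X u z ->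
    afun Y v z <= p z <= bfun X u z.

Definition demand Z0 u (p : Zpt R d3 -> R) (x : 'rV[R]_d1) : set (Zpt R d3) :=
  [set z | Zset Z0 z /\
     forall z', Zset Z0 z' -> uZ u x z' - p z' <= uZ u x z - p z].
Definition supply Z0 v (p : Zpt R d3 -> R) (y : 'rV[R]_d2) : set (Zpt R d3) :=
  [set z | Zset Z0 z /\
     forall z', Zset Z0 z' -> vZ v y z - p z <= vZ v y z' - p z'].

Definition demand_distribution X Z0 u p (mu : set (Bor d1) -> \bar R)
    (alpha : {measure set (Bor d1 * ZT)%type -> \bar R}) : Prop :=
  alpha.-negligible (~` [set q | X q.1 /\ demand Z0 u p q.1 q.2]) /\
  forall A : set (Bor d1), measurable A -> alpha (A `*` setT) = mu A.

Definition supply_distribution Y Z0 v p (nu : set (Bor d2) -> \bar R)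
    (beta : {measure set (Bor d2 * ZT)%type -> \bar R}) : Prop :=
  beta.-negligible (~` [set q | Y q.1 /\ supply Z0 v p q.1 q.2]) /\
  forall A : set (Bor d2), measurable A -> beta (A `*` setT) = nu A.

Definition equilibrium X Y Z0 mu nu u v p
    (alpha : {measure set (Bor d1 * ZT)%type -> \bar R})
    (beta : {measure set (Bor d2 * ZT)%type -> \bar R}) : Prop :=
  [/\ admissible X Y Z0 u v p,
      demand_distribution X Z0 u p mu alpha,
      supply_distribution Y Z0 v p nu beta &
      forall B : set (Bor d3), measurable B -> B `<=` Z0 ->
        alpha (setT `*` (Zgood @` B)) = beta (setT `*` (Zgood @` B))].

End Market.

(** f is continuous on a neighbourhood U of A × Z0, differentiable in its
    first variable there, with continuous partial differential D_1 f
    (expressed through the directional derivatives 'D_w, which are the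
    values of the linear map D_1 f). *)
Definition regular_near (R : realType) (n m : nat)
    (A : set 'rV[R]_n) (Z0 : set 'rV[R]_m) (f : 'rV[R]_n -> 'rV[R]_m -> R) : Prop :=
  exists U : set ('rV[R]_n * 'rV[R]_m),
    [/\ open U, A `*` Z0 `<=` U,
        forall q, U q -> {for q, continuous (fun q' : 'rV[R]_n * 'rV[R]_m => f q'.1 q'.2)},
        forall q, U q -> differentiable (fun x => f x q.2) q.1 &
        forall (w : 'rV[R]_n) q, U q ->
          {for q, continuous (fun q' : 'rV[R]_n * 'rV[R]_m =>
                                'D_w (fun x => f x q'.2) q'.1)}].

From HB Require Import structures.
From mathcomp Require Import all_boot all_order all_algebra.
From mathcomp Require Import all_classical all_reals all_analysis.
From mathcomp Require Import ring lra measurable_realfun.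
Import Order.TTheory GRing.Theory Num.Theory.
Import numFieldNormedType.Exports.
Local Open Scope classical_set_scope.
Local Open Scope ring_scope.
Set Implicit Arguments. Unset Strict Implicit. Unset Printing Implicit Defensive.

(** For prices q let U_q(x) = sup_z (u(x,z) - q(z)) be the indirect utility. If z is in
    D_1(x), the regret U_p2(x) - U_p1(x) + p2(z) - p1(z) is nonnegative, and it vanishes
    iff z is in D_2(x). Its integral against alpha^1, the same integral for alpha^2 with p1
    and p2 exchanged, and the two analogous supply-side integrals are nonnegative and add up
    to zero: the X-marginals of alpha^1 and alpha^2 are both mu, the Y-marginals of beta^1
    and beta^2 both nu, and market clearing identifies the Z0-marginals of alpha^i and
    beta^i. Hence the regret vanishes alpha^1-almost everywhere.

    To transfer this to mu without disintegrating alpha^1, bound the regret at every z in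
    D_1(x) from below by the measurable functions
      h_N(x) = U_p2(x) - U_p1(x) - (N+1) (U_{p1 + (p2 - p1)/(N+1)}(x) - U_p1(x)).
    When D_1(x) = {d}, compactness gives a uniform utility gap away from d, and this
    envelope argument yields h_N(x) > 0 for some N as soon as the regret at d is positive.
    So the set where some h_N is positive is mu-null, and off it D_1(x) = {d} forces d in
    D_2(x). *)

(** * Measurability on R^n and on Z *)

Lemma relatively_open_setI (T : topologicalType) (S P : set T) :
  (forall x, S x -> P x -> \forall y \near x, S y -> P y) ->
  exists2 O, open O & S `&` P = S `&` O.
Proof.
move=> SP; exists (\bigcup_(x in S `&` P) [set y | S y -> P y]°).
  by apply: bigcup_open => x _; exact: open_interior.
apply/seteqP; split => y [Sy].
  by move=> Py; split => //; exists y => //; exact: SP.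
by move=> [x _ /interior_subset]; move/(_ Sy).
Qed.

Lemma within_continuous_near_gt (T : topologicalType) (R : realType)
    (A : set T) (f : T -> R) x c :
  {within A, continuous f} -> A x -> c < f x -> \forall y \near x, A y -> c < f y.
Proof.
move=> fc Ax cfx; have /cvgr_gt /(_ _ cfx) near_x := fc x.
suff : within A (nbhs x) [set y | c < f y] by [].
by rewrite (nbhs_subspace_in Ax).
Qed.

Lemma measurable_fun_from_superlevel d (T : measurableType d) (R : realType)
    (D : set T) (f : T -> R) :
  (forall c, measurable (D `&` [set x | c < f x])) -> measurable_fun D f.
Proof.
move=> mf; apply: (measurability _ (RGenOInfty.measurableE R)).
move=> _ [_ [c ->] <-]; rewrite (_ : _ @^-1` _ = [set x | c < f x]) //.
by apply/seteqP; split => x /=; rewrite in_itv /= andbT.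
Qed.

Section Borel.
Variables (R : realType) (n : nat).

Lemma Bor_measurable_open (O : set 'rV[R]_n) : open O -> measurable (O : set (Bor R n)).
Proof. exact: sub_sigma_algebra. Qed.

Lemma Bor_measurable_closed (C : set 'rV[R]_n) : closed C -> measurable (C : set (Bor R n)).
Proof.
move=> cC; rewrite -(setCK C); apply: measurableC; apply: Bor_measurable_open.
by rewrite openC.
Qed.

Lemma Bor_measurable_compact (C : set 'rV[R]_n) : compact C -> measurable (C : set (Bor R n)).
Proof.
move=> cC; apply: Bor_measurable_closed.
by apply: compact_closed cC; exact: (@norm_hausdorff R 'rV[R]_n).
Qed.

Lemma Bor_measurable_fun_lsc (A : set 'rV[R]_n) (f : 'rV[R]_n -> R) :
  measurable (A : set (Bor R n)) ->
  (forall x c, A x -> c < f x -> \forall y \near x, A y -> c < f y) ->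
  measurable_fun (A : set (Bor R n)) f.
Proof.
move=> mA flsc; apply: measurable_fun_from_superlevel => c.
have [U oU ->] := relatively_open_setI (fun x Ax => flsc x c Ax).
by apply: measurableI => //; exact: Bor_measurable_open.
Qed.

End Borel.

Section ZTmeasurable.
Variables (R : realType) (d : nat).
Local Notation Bor := (Bor R d).
Local Notation ZT := (ZT R d).

Lemma measurable_Zempty_d : measurable ([set Zempty_d] : set ZT).
Proof. by apply: sub_sigma_algebra; right; left. Qed.

Lemma measurable_Zempty_s : measurable ([set Zempty_s] : set ZT).
Proof. by apply: sub_sigma_algebra; right; right. Qed.

Lemma measurable_image_Zgood (B : set Bor) : measurable B -> measurable (Zgood @` B : set ZT).
Proof.
have Zgood_inj : injective (@Zgood R d) by move=> a b [].
pose S := [set B : set Bor | measurable (Zgood @` B : set ZT)].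
have SO O : open O -> S O by move=> oO; apply: sub_sigma_algebra; left; exists O.
suff : <<s (open : set (set 'rV[R]_d)) >> `<=` S by apply.
apply: smallest_sub => //; split.
- by rewrite /S /= image_set0.
- move=> E SE; rewrite /S /= setTD.
  rewrite (_ : _ @` _ = Zgood @` setT `\` Zgood @` E).
    by apply: measurableD => //; exact: (SO _ openT).
  apply/seteqP; split => [_ [z nEz <-]|_ [[z _ <-] nE]].
    by split; [exists z | move=> [z' Ez' /Zgood_inj ez]; apply: nEz; rewrite -ez].
  by exists z => // Ez; apply: nE; exists z.
- by move=> F SF; rewrite /S /= image_bigcup; exact: bigcupT_measurable.
Qed.

Lemma measurable_preimage_Zgood (C : set ZT) : measurable C ->
  measurable (Zgood @^-1` C : set Bor).
Proof.
move=> mC.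
pose S := [set C : set ZT | measurable (Zgood @^-1` C : set Bor)].
suff : <<s (@GZ R d) >> `<=` S by apply.
apply: smallest_sub.
  split.
  - by rewrite /S /= preimage_set0.
  - by move=> B SB; rewrite /S /= setTD preimage_setC; apply: measurableC.
  - by move=> F SF; rewrite /S /= preimage_bigcup; apply: bigcupT_measurable.
move=> B [[V oV ->]|[->|->]]; rewrite /S /=.
- rewrite (_ : _ @^-1` _ = V); first exact: Bor_measurable_open.
  by apply/seteqP; split => [x [y Vy [<-]] | x Vx] //; exists x.
- by rewrite (_ : _ @^-1` _ = set0) //; apply/seteqP; split.
- by rewrite (_ : _ @^-1` _ = set0) //; apply/seteqP; split.
Qed.

Lemma measurable_fun_ZT (f : ZT -> R) :
  measurable_fun (setT : set Bor) (f \o Zgood) -> measurable_fun (setT : set ZT) f.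
Proof.
move=> mf _ B mB; rewrite setTI.
have mpoint (z : ZT) : measurable [set z] -> measurable ([set z] `&` f @^-1` B).
  by move=> mz; have [->|->] := subset_set1 (@subIsetl _ [set z] (f @^-1` B)).
rewrite (_ : f @^-1` B = Zgood @` ((f \o Zgood) @^-1` B) `|`
  ([set Zempty_d] `&` f @^-1` B) `|` ([set Zempty_s] `&` f @^-1` B)).
  apply: measurableU; [apply: measurableU|].
  - by apply: measurable_image_Zgood; rewrite -[X in measurable X]setTI; exact: mf.
  - by apply: mpoint; exact: measurable_Zempty_d.
  - by apply: mpoint; exact: measurable_Zempty_s.
apply/seteqP; split => [[z||] fB|z].
- by left; left; exists z.
- by left; right.
- by right.
- by case=> [[[z' fz' <-]|[-> fB]]|[-> fB]].
Qed.

End ZTmeasurable.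

(** * Bounded measurable functions *)

Section BoundedMeasurable.
Context d (T : measurableType d) (R : realType).

Definition bounded_measurable (f : T -> R) :=
  measurable_fun setT f /\ exists M, forall t, `|f t| <= M.

Lemma bounded_measurableD f g : bounded_measurable f -> bounded_measurable g ->
  bounded_measurable (fun t => f t + g t).
Proof.
move=> [mf [M fM]] [mg [N gN]]; split; first exact: measurable_funD.
by exists (M + N) => t; rewrite (le_trans (ler_normD _ _)) ?lerD.
Qed.

Lemma bounded_measurableN f : bounded_measurable f -> bounded_measurable (fun t => - f t).
Proof.
by move=> [mf [M fM]]; split; [exact: measurable_funN | exists M => t; rewrite normrN].
Qed.

Lemma bounded_measurableB f g : bounded_measurable f -> bounded_measurable g ->
  bounded_measurable (fun t => f t - g t).
Proof. by move=> bf bg; apply: bounded_measurableD => //; exact: bounded_measurableN. Qed.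

Variable mu : {measure set T -> \bar R}.
Hypothesis mu_fin : (mu setT < +oo)%E.

Lemma bounded_measurable_integrable f : bounded_measurable f -> mu.-integrable setT (EFin \o f).
Proof.
move=> [mf [M fM]]; apply: measurable_bounded_integrable => //.
by exists M; split; [exact: num_real | move=> y My t _; exact: le_trans (fM t) (ltW My)].
Qed.

Lemma Rintegral_bounded_measurableD f g : bounded_measurable f -> bounded_measurable g ->
  Rintegral mu setT (fun t => f t + g t) = Rintegral mu setT f + Rintegral mu setT g.
Proof. by move=> bf bg; apply: RintegralD => //; exact: bounded_measurable_integrable. Qed.

Lemma Rintegral_bounded_measurableB f g : bounded_measurable f -> bounded_measurable g ->
  Rintegral mu setT (fun t => f t - g t) = Rintegral mu setT f - Rintegral mu setT g.
Proof. by move=> bf bg; apply: RintegralB => //; exact: bounded_measurable_integrable. Qed.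

Lemma Rintegral_bounded_measurableN f : bounded_measurable f ->
  Rintegral mu setT (fun t => - f t) = - Rintegral mu setT f.
Proof.
move=> bf; have b0 : bounded_measurable (fun=> 0 : R).
  by split; [exact: measurable_cst | exists 0 => t; rewrite normr0].
have := Rintegral_bounded_measurableB b0 bf.
rewrite [Rintegral _ _ (fun=> 0)]/Rintegral integral0 sub0r => <-.
by apply: eq_Rintegral => t _; rewrite sub0r.
Qed.

Lemma integral_ae_ge0_abs (f : T -> R) : measurable_fun setT f -> {ae mu, forall t, 0 <= f t} ->
  (\int[mu]_t (f t)%:E = \int[mu]_t `|(f t)%:E|)%E.
Proof.
move=> mf f_ge0; apply: ae_eq_integral => //.
- exact/measurable_EFinP.
- by apply/measurableT_comp => //; exact/measurable_EFinP.
- by apply: filterS f_ge0 => t ft _ /=; rewrite ger0_norm.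
Qed.

Lemma Rintegral_ae_ge0 (f : T -> R) : bounded_measurable f -> {ae mu, forall t, 0 <= f t} ->
  0 <= Rintegral mu setT f.
Proof.
by move=> [mf _] f_ge0; rewrite /Rintegral integral_ae_ge0_abs // fine_ge0 // integral_ge0.
Qed.

Lemma Rintegral_ae_ge0_eq0 (f : T -> R) : bounded_measurable f -> {ae mu, forall t, 0 <= f t} ->
  Rintegral mu setT f = 0 -> {ae mu, forall t, f t = 0}.
Proof.
move=> bf f_ge0 f0; have [mf _] := bf.
have mfE : measurable_fun setT (EFin \o f) by exact/measurable_EFinP.
have fin : (\int[mu]_t (f t)%:E \is a fin_num)%E.
  by apply: integrable_fin_num => //; exact: bounded_measurable_integrable.
have /(ae_eq_integral_abs mu measurableT mfE) :
    (\int[mu]_t `|(f t)%:E| = 0)%E.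
  by rewrite -integral_ae_ge0_abs // -(fineK fin); exact: (congr1 EFin f0).
by apply: filterS => t /(_ I) [].
Qed.

End BoundedMeasurable.

Lemma bounded_measurable_comp (R : realType) d (T : measurableType d) d'
    (T' : measurableType d') (phi : T' -> T) (f : T -> R) :
  measurable_fun setT phi -> bounded_measurable f -> bounded_measurable (f \o phi).
Proof.
by move=> mphi [mf [M fM]]; split; [exact: measurableT_comp | exists M => t; exact: fM].
Qed.

Lemma Rintegral_pushforward_eq (R : realType) d1 d2 d' (T1 : measurableType d1)
    (T2 : measurableType d2) (T' : measurableType d')
    (g1 : {measure set T1 -> \bar R}) (g2 : {measure set T2 -> \bar R})
    (phi1 : T1 -> T') (phi2 : T2 -> T') (G : set T') (f : T' -> R) :
  measurable_fun setT phi1 -> measurable_fun setT phi2 ->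
  (g1 setT < +oo)%E -> (g2 setT < +oo)%E -> measurable G ->
  (forall B, measurable B -> B `<=` G -> g1 (phi1 @^-1` B) = g2 (phi2 @^-1` B)) ->
  (forall z, ~ G z -> f z = 0) -> bounded_measurable f ->
  Rintegral g1 setT (f \o phi1) = Rintegral g2 setT (f \o phi2).
Proof.
move=> mphi1 mphi2 g1_fin g2_fin mG g12 f0 bf.
have mfE : measurable_fun setT (EFin \o f) by case: bf => mf _; exact/measurable_EFinP.
have int1 := bounded_measurable_integrable g1_fin (bounded_measurable_comp mphi1 bf).
have int2 := bounded_measurable_integrable g2_fin (bounded_measurable_comp mphi2 bf).
rewrite /Rintegral; congr fine.
rewrite -[LHS](@integral_pushforward _ _ _ _ _ phi1 mphi1 g1 setT _ mfE) //.
rewrite -[RHS](@integral_pushforward _ _ _ _ _ phi2 mphi2 g2 setT _ mfE) //.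
have -> : EFin \o f = (EFin \o f) \_ G.
  apply/funext => z; rewrite patchE; case: ifPn => // /negP Gz /=.
  by rewrite f0 // => /mem_set.
rewrite -!integral_mkcond; apply: eq_measure_integral => B mB BG.
exact: g12.
Qed.

(** * Indirect utility and the envelope bound *)

Section Envelope.
Variables (R : realType) (n d : nat) (A : set 'rV[R]_n) (Z0 : set 'rV[R]_d).
Variables (w : 'rV[R]_n -> 'rV[R]_d -> R) (wd ws : R).
Hypotheses (cA : compact A) (cZ : compact Z0).
Hypothesis w_cont : forall x z, A x -> Z0 z ->
  {for (x, z), continuous (fun q : 'rV[R]_n * 'rV[R]_d => w q.1 q.2)}.

(* With w := u, wd := 0, ws := -1, [maximizers] is [demand] of the market;
   [supplyE] casts [supply] in the same form. *)
Definition wZ x (z : Zpt R d) : R :=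
  match z with Zgood z0 => w x z0 | Zempty_d => wd | Zempty_s => ws end.
Definition gain (q : Zpt R d -> R) x z := wZ x z - q z.
Definition indirect q x := sup [set gain q x z | z in Zset Z0].
Definition maximizers q x := [set z | Zset Z0 z /\
  forall z', Zset Z0 z' -> gain q x z' <= gain q x z].

Lemma Zset_Zempty_d : Zset Z0 (@Zempty_d R d). Proof. by []. Qed.

Lemma w_bounded : exists M, forall x z, A x -> Z0 z -> `|w x z| <= M.
Proof.
have w_cont_AZ : {within A `*` Z0, continuous (fun q : 'rV[R]_n * 'rV[R]_d => w q.1 q.2)}.
  by apply: continuous_in_subspaceT => -[x z] /set_mem [Ax Zz]; exact: w_cont.
have /compact_bounded := continuous_compact w_cont_AZ (compact_setX cA cZ).
move=> /ex_strict_bound_gt0 [M _ wM]; exists M => x z Ax Zz.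
by apply/ltW/wM; exists (x, z).
Qed.

Lemma price_bounded q : price_system Z0 q -> exists M, forall z, Zset Z0 z -> `|q z| <= M.
Proof.
case=> qd qs qc; have /compact_bounded := continuous_compact qc cZ.
move=> /ex_strict_bound_gt0 [M M0 qM]; exists M => -[z0||] /=.
- by move=> Zz; apply/ltW/qM; exists z0.
- by rewrite qd normr0 ltW.
- by rewrite qs normr0 ltW.
Qed.

Lemma gain_bounded q : price_system Z0 q ->
  exists M, forall x z, A x -> Zset Z0 z -> `|gain q x z| <= M.
Proof.
move=> /price_bounded [Mq qM]; have [Mw wM] := w_bounded.
exists (`|Mw| + `|wd| + `|ws| + Mq) => x z Ax Zz.
rewrite /gain (le_trans (ler_normB _ _)) //.
have := qM z Zz; have := ler_norm Mw; have := normr_ge0 Mw.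
have := normr_ge0 wd; have := normr_ge0 ws.
by case: z Zz => [z0||] /= Zz; [have := wM x z0 Ax Zz | |]; lra.
Qed.

Lemma gain_le_indirect q x z : price_system Z0 q -> A x -> Zset Z0 z ->
  gain q x z <= indirect q x.
Proof.
move=> /gain_bounded [M gM] Ax Zz; apply: ub_le_sup; last by exists z.
by exists M => _ [z' Zz' <-]; exact: le_trans (ler_norm _) (gM x z' Ax Zz').
Qed.

Lemma indirect_le q x c : (forall z, Zset Z0 z -> gain q x z <= c) -> indirect q x <= c.
Proof.
move=> gc; apply: ge_sup => [|_ [z Zz <-]]; last exact: gc.
by exists (gain q x Zempty_d), Zempty_d.
Qed.

Lemma indirect_gt q x c : c < indirect q x -> exists2 z, Zset Z0 z & c < gain q x z.
Proof.
move=> /sup_gt [|_ [z Zz <-] cz]; last by exists z.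
by exists (gain q x Zempty_d), Zempty_d.
Qed.

Lemma maximizers_gain q x z : price_system Z0 q -> A x -> maximizers q x z ->
  gain q x z = indirect q x.
Proof.
move=> qs Ax [Zz zmax]; apply/eqP; rewrite eq_le gain_le_indirect //=.
exact: indirect_le.
Qed.

Lemma gain_lt_indirect q x z : price_system Z0 q -> A x -> Zset Z0 z ->
  ~ maximizers q x z -> gain q x z < indirect q x.
Proof.
move=> qs Ax Zz zmax; rewrite ltNge; apply/negP => ge_z; apply: zmax.
by split => // z' Zz'; exact: le_trans (gain_le_indirect qs Ax Zz') ge_z.
Qed.

Lemma indirect_bounded q : price_system Z0 q ->
  exists M, forall x, A x -> `|indirect q x| <= M.
Proof.
move=> qs; have [M gM] := gain_bounded qs; exists M => x Ax.
rewrite ler_norml; apply/andP; split.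
- have := gM x _ Ax Zset_Zempty_d; rewrite ler_norml => /andP[+ _].
  by move/le_trans; apply; exact: gain_le_indirect.
- by apply: indirect_le => z Zz; have := gM x z Ax Zz; rewrite ler_norml => /andP[].
Qed.

Lemma gain_continuous q x z : A x -> Zset Z0 z ->
  {for x, continuous (fun y => gain q y z)}.
Proof.
move=> Ax; case: z => [z0||] /= Zz; rewrite /gain /=; [|exact: cst_continuous..].
have pair_cont : {for x, continuous (fun y : 'rV[R]_n => (y, z0))}.
  exact: (@cvg_pair _ _ _ (nbhs x) _ _ _ _ _ id (fun=> z0) cvg_id (cvg_cst z0)).
exact: cvgB (continuous_comp pair_cont (w_cont Ax Zz)) (cvg_cst _).
Qed.

Lemma w_within_continuous x : A x -> {within Z0, continuous (w x)}.
Proof.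
move=> Ax; apply: continuous_in_subspaceT => z0 /set_mem Zz.
have pair_cont : {for z0, continuous (fun z : 'rV[R]_d => (x, z))}.
  exact: (@cvg_pair _ _ _ (nbhs z0) _ _ _ _ _ (fun=> x) id (cvg_cst x) cvg_id).
exact: continuous_comp pair_cont (w_cont Ax Zz).
Qed.

Lemma measurable_indirect q : price_system Z0 q ->
  measurable_fun (A : set (Bor R n)) (indirect q).
Proof.
move=> qs; apply: Bor_measurable_fun_lsc; first exact: Bor_measurable_compact.
move=> x c Ax /indirect_gt [z Zz cz].
have /cvgr_gt /(_ _ cz) := gain_continuous (q := q) Ax Zz.
by apply: filterS => y cy Ay; exact: lt_le_trans cy (gain_le_indirect qs Ay Zz).
Qed.

Lemma gain_gap_compact q x (K : set 'rV[R]_d) : price_system Z0 q -> A x ->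
  compact K -> K `<=` Z0 -> (forall z0, K z0 -> ~ maximizers q x (Zgood z0)) ->
  exists2 del : R, 0 < del & forall z0, K z0 -> gain q x (Zgood z0) <= indirect q x - del.
Proof.
move=> qs Ax cK KZ K_not_max.
have [[m Km]|K0] := pselect (K !=set0); last first.
  by exists 1 => // z0 Kz0; exfalso; apply: K0; exists z0.
have gain_cont : {within K, continuous (fun z0 => gain q x (Zgood z0))}.
  apply: continuous_subspaceW KZ _; case: qs => _ _ qc.
  exact: within_continuousB (w_within_continuous Ax) qc.
have [mx /set_mem Kmx mx_max] := compact_EVT_max (ex_intro _ m Km) cK gain_cont.
exists (indirect q x - gain q x (Zgood mx)).
  rewrite subr_gt0; apply: gain_lt_indirect => //; [exact: KZ | exact: K_not_max].
by move=> z0 Kz0; have := mx_max z0 (mem_set Kz0); lra.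
Qed.

Lemma gain_gap q x (g : Zpt R d -> R) c : price_system Z0 q -> A x ->
  {within Z0, continuous (g \o Zgood)} ->
  (forall z, Zset Z0 z -> c <= g z -> ~ maximizers q x z) ->
  exists2 del : R, 0 < del & forall z, Zset Z0 z -> c <= g z ->
    gain q x z <= indirect q x - del.
Proof.
move=> qs Ax gc g_not_max.
have point_gap z : Zset Z0 z -> exists2 del : R, 0 < del &
    (c <= g z -> gain q x z <= indirect q x - del).
  move=> Zz; have [cz|zc] := leP c (g z); last by exists 1 => // cz; lra.
  exists (indirect q x - gain q x z) => [|_]; last lra.
  by rewrite subr_gt0; apply: gain_lt_indirect => //; exact: g_not_max.
have [deld deld0 gapd] := point_gap _ Zset_Zempty_d.
have [dels dels0 gaps] := point_gap (@Zempty_s R d) I.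
pose K := Z0 `&` [set z0 | c <= g (Zgood z0)].
have cK : compact K.
  have [U oU ZU] : exists2 U, open U &
      Z0 `&` [set z0 | - c < - g (Zgood z0)] = Z0 `&` U.
    apply: relatively_open_setI => z0 Zz0 cz0.
    apply: (@within_continuous_near_gt _ _ Z0 (fun z1 => - g (Zgood z1))) => // z1.
    by apply: cvgN; exact: gc.
  rewrite (_ : K = Z0 `&` ~` U); first exact: compact_closedI cZ (open_closedC oU).
  apply/seteqP; split => z0 [Zz0 z0U]; split => //.
    move=> Uz0; have : (Z0 `&` U) z0 by [].
    by rewrite -ZU => -[_ /=]; rewrite ltrN2; move: z0U => /=; lra.
  case: (leP c (g (Zgood z0))) => // gc0; exfalso; apply: z0U.
  have : (Z0 `&` [set z0 | - c < - g (Zgood z0)]) z0 by split => //=; rewrite ltrN2.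
  by rewrite ZU => -[].
have [delK delK0 gapK] := gain_gap_compact qs Ax cK (@subIsetl _ _ _)
  (fun z0 Kz0 => g_not_max (Zgood z0) Kz0.1 Kz0.2).
pose del := Num.min delK (Num.min deld dels).
have [le_K le_d le_s] : [/\ del <= delK, del <= deld & del <= dels].
  by rewrite !ge_min !lexx !orbT.
exists del => [|z Zz cz]; first by rewrite !lt_min delK0 deld0 dels0.
case: z Zz cz => [z0||] /= Zz cz.
- by have := gapK z0 (conj Zz cz); lra.
- by have := gapd cz; lra.
- by have := gaps cz; lra.
Qed.

Definition price_mix (q1 q2 : Zpt R d -> R) (N : nat) z :=
  q1 z + (q2 z - q1 z) / N.+1%:R.

Lemma price_system_mix q1 q2 N : price_system Z0 q1 -> price_system Z0 q2 ->
  price_system Z0 (price_mix q1 q2 N).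
Proof.
case=> q1d q1s q1c [q2d q2s q2c]; split; rewrite /price_mix ?q1d ?q1s ?q2d ?q2s.
- by rewrite subrr mul0r addr0.
- by rewrite subrr mul0r addr0.
have q21c := within_continuousB q2c q1c.
by move=> z; apply: cvgD; [exact: q1c | apply: cvgM; [exact: q21c | exact: cvg_cst]].
Qed.

Lemma gain_mix q1 q2 N x z :
  gain (price_mix q1 q2 N) x z = gain q1 x z + (q1 z - q2 z) / N.+1%:R.
Proof. by rewrite /gain /price_mix; ring. Qed.

Lemma indirect_mix_le q1 q2 x dd eps :
  price_system Z0 q1 -> price_system Z0 q2 -> A x -> maximizers q1 x = [set dd] -> 0 < eps ->
  exists N : nat, indirect (price_mix q1 q2 N) x <=
    indirect q1 x + (q1 dd - q2 dd + eps) / N.+1%:R.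
Proof.
move=> qs1 qs2 Ax D1x eps0.
pose g z := q1 z - q2 z; pose c := g dd + eps.
have gc : {within Z0, continuous (g \o Zgood)}.
  by case: qs1 => _ _ q1c; case: qs2 => _ _ q2c; exact: within_continuousB q1c q2c.
have far_not_max z : Zset Z0 z -> c <= g z -> ~ maximizers q1 x z.
  by rewrite D1x => Zz + /= zdd; rewrite zdd /c; lra.
have [del del0 gap] := gain_gap qs1 Ax gc far_not_max.
have [M1 q1M] := price_bounded qs1; have [M2 q2M] := price_bounded qs2.
have gM z : Zset Z0 z -> `|g z| <= M1 + M2.
  move=> Zz; rewrite (le_trans (ler_normB _ _)) //; exact: lerD (q1M z Zz) (q2M z Zz).
pose N := Num.truncn ((M1 + M2 + `|c|) / del); exists N.
have N0 : 0 < N.+1%:R :> R by rewrite ltr0n.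
have N_large : M1 + M2 + `|c| < del * N.+1%:R.
  by rewrite mulrC -ltr_pdivrMr //; exact: truncnS_gt.
apply: indirect_le => z Zz; rewrite gain_mix -/(g z) -/(g dd) -/c.
have g1 := gain_le_indirect qs1 Ax Zz.
have [cz|zc] := leP c (g z); last first.
  by apply: lerD g1 _; rewrite ler_pM2r ?invr_gt0 // ltW.
have gap_z := gap z Zz cz.
have : g z - c <= del * N.+1%:R.
  have := gM z Zz; have := ler_norm (g z); have := ler_norm (- c); rewrite normrN; lra.
rewrite -ler_pdivrMr // mulrBl.
by move: (g z / _) (c / _) => gzN cN; lra.
Qed.

Definition gap_minorant q1 q2 N x :=
  indirect q2 x - indirect q1 x - N.+1%:R * (indirect (price_mix q1 q2 N) x - indirect q1 x).

Lemma gap_minorant_le q1 q2 N x z :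
  price_system Z0 q1 -> price_system Z0 q2 -> A x -> maximizers q1 x z ->
  gap_minorant q1 q2 N x <= indirect q2 x - indirect q1 x + q2 z - q1 z.
Proof.
move=> qs1 qs2 Ax D1z; have Zz : Zset Z0 z by case: D1z.
have := gain_le_indirect (price_system_mix N qs1 qs2) Ax Zz.
rewrite gain_mix (maximizers_gain qs1 Ax D1z) => mix_ge.
have : q1 z - q2 z <= N.+1%:R * (indirect (price_mix q1 q2 N) x - indirect q1 x).
  by rewrite mulrC -ler_pdivrMr ?ltr0n //; move: (_ / _) mix_ge => t mix_ge; lra.
by rewrite /gap_minorant; lra.
Qed.

Lemma gap_minorant_gt q1 q2 x dd :
  price_system Z0 q1 -> price_system Z0 q2 -> A x -> maximizers q1 x = [set dd] ->
  0 < indirect q2 x - indirect q1 x + q2 dd - q1 dd ->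
  exists N, 0 < gap_minorant q1 q2 N x.
Proof.
move=> qs1 qs2 Ax D1x gap0.
have [N mixN] := indirect_mix_le qs1 qs2 Ax D1x (divr_gt0 gap0 (ltr0n R 2)).
exists N.
have : N.+1%:R * (indirect (price_mix q1 q2 N) x - indirect q1 x) <=
    q1 dd - q2 dd + (indirect q2 x - indirect q1 x + q2 dd - q1 dd) / 2.
  by rewrite mulrC -ler_pdivlMr ?ltr0n //; move: (_ / N.+1%:R) mixN => t mixN; lra.
by rewrite /gap_minorant; lra.
Qed.

Lemma measurable_gap_minorant q1 q2 N : price_system Z0 q1 -> price_system Z0 q2 ->
  measurable_fun (A : set (Bor R n)) (gap_minorant q1 q2 N).
Proof.
move=> qs1 qs2; have m1 := measurable_indirect qs1; have m2 := measurable_indirect qs2.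
have m12 := measurable_indirect (price_system_mix N qs1 qs2).
apply: measurable_funB; first exact: measurable_funB.
by apply: measurable_funM; [exact: measurable_cst | exact: measurable_funB].
Qed.

(** * Regret *)

Definition indirect_on q : Bor R n -> R := indirect q \_ A.
Definition price_on (q : Zpt R d -> R) : ZT R d -> R := q \_ (Zset Z0).

(* Written as a sum of a function of x and a function of z, so that its
   integral only depends on the marginals; see [regretE] for its meaning. *)
Definition regret q1 q2 : Bor R n * ZT R d -> R := fun t =>
  ((indirect_on q2 \o fst) t - (indirect_on q1 \o fst) t) +
  ((price_on q2 \o snd) t - (price_on q1 \o snd) t).

Lemma regretE q1 q2 x z : A x -> Zset Z0 z ->
  regret q1 q2 (x, z) = indirect q2 x - indirect q1 x + (q2 z - q1 z).
Proof. by move=> Ax Zz; rewrite /regret /indirect_on /price_on /= !patchE !mem_set. Qed.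

Lemma regret_ge0 q1 q2 x z : price_system Z0 q1 -> price_system Z0 q2 -> A x ->
  maximizers q1 x z -> 0 <= regret q1 q2 (x, z).
Proof.
move=> qs1 qs2 Ax D1z; have Zz : Zset Z0 z by case: D1z.
rewrite regretE //; have := gain_le_indirect qs2 Ax Zz.
by rewrite -(maximizers_gain qs1 Ax D1z) /gain; lra.
Qed.

Lemma bounded_measurable_indirect_on q : price_system Z0 q ->
  bounded_measurable (indirect_on q).
Proof.
move=> qs; split.
  by apply/(measurable_restrictT _ (Bor_measurable_compact cA)); exact: measurable_indirect.
have [M iM] := indirect_bounded qs; exists `|M| => x; rewrite /indirect_on patchE.
case: ifPn => [/set_mem Ax|_]; last by rewrite normr0.
exact: le_trans (iM x Ax) (ler_norm M).
Qed.

Lemma bounded_measurable_price_on q : price_system Z0 q -> bounded_measurable (price_on q).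
Proof.
move=> qs; split.
  apply: measurable_fun_ZT.
  rewrite (_ : _ \o _ = (q \o Zgood) \_ Z0); last first.
    apply/funext => z0; rewrite /price_on /= !patchE.
    by case: (pselect (Z0 z0)) => Zz0; [rewrite !mem_set | rewrite !memNset].
  apply/(measurable_restrictT _ (Bor_measurable_compact cZ)).
  apply: Bor_measurable_fun_lsc; first exact: Bor_measurable_compact.
  by case: qs => _ _ qc z0 c Zz0; exact: within_continuous_near_gt.
have [M qM] := price_bounded qs; exists `|M| => z; rewrite /price_on patchE.
case: ifPn => [/set_mem Zz|_]; last by rewrite normr0.
exact: le_trans (qM z Zz) (ler_norm M).
Qed.

Lemma bounded_measurable_regret q1 q2 : price_system Z0 q1 -> price_system Z0 q2 ->
  bounded_measurable (regret q1 q2).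
Proof.
move=> qs1 qs2; apply: bounded_measurableD; apply: bounded_measurableB;
  apply: bounded_measurable_comp; do ?[exact: measurable_fst | exact: measurable_snd];
  do ?[exact: bounded_measurable_indirect_on | exact: bounded_measurable_price_on].
Qed.

Section RegretIntegral.
Variable g : {measure set (Bor R n * ZT R d)%type -> \bar R}.
Hypothesis g_fin : (g setT < +oo)%E.

Lemma Rintegral_regret q1 q2 : price_system Z0 q1 -> price_system Z0 q2 ->
  Rintegral g setT (regret q1 q2) =
  (Rintegral g setT (indirect_on q2 \o fst) - Rintegral g setT (indirect_on q1 \o fst)) +
  (Rintegral g setT (price_on q2 \o snd) - Rintegral g setT (price_on q1 \o snd)).
Proof.
move=> qs1 qs2.
have i1 := bounded_measurable_comp (T' := (Bor R n * ZT R d)%type) measurable_fst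
  (bounded_measurable_indirect_on qs1).
have i2 := bounded_measurable_comp (T' := (Bor R n * ZT R d)%type) measurable_fst
  (bounded_measurable_indirect_on qs2).
have p1 := bounded_measurable_comp (T' := (Bor R n * ZT R d)%type) measurable_snd
  (bounded_measurable_price_on qs1).
have p2 := bounded_measurable_comp (T' := (Bor R n * ZT R d)%type) measurable_snd
  (bounded_measurable_price_on qs2).
rewrite /regret (Rintegral_bounded_measurableD g_fin (bounded_measurableB i2 i1)
  (bounded_measurableB p2 p1)).
by rewrite (Rintegral_bounded_measurableB g_fin i2 i1) (Rintegral_bounded_measurableB g_fin p2 p1).
Qed.

Lemma Rintegral_regret_ge0 q1 q2 : price_system Z0 q1 -> price_system Z0 q2 ->
  {ae g, forall t : Bor R n * ZT R d, A t.1 /\ maximizers q1 t.1 t.2} ->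
  0 <= Rintegral g setT (regret q1 q2).
Proof.
move=> qs1 qs2 graph.
apply: (Rintegral_ae_ge0 (bounded_measurable_regret qs1 qs2)).
by apply: filterS graph => -[x z] [Ax D1z]; exact: regret_ge0.
Qed.

Lemma ae_gap_minorant_le0 (mu : {measure set (Bor R n) -> \bar R}) q1 q2 :
  price_system Z0 q1 -> price_system Z0 q2 ->
  (forall B, measurable B -> g (B `*` setT) = mu B) ->
  {ae g, forall t : Bor R n * ZT R d, A t.1 /\ maximizers q1 t.1 t.2} ->
  Rintegral g setT (regret q1 q2) = 0 ->
  {ae mu, forall (x : Bor R n) N, A x -> gap_minorant q1 q2 N x <= 0}.
Proof.
move=> qs1 qs2 marg graph regret0.
have regret_ae0 : {ae g, forall t : Bor R n * ZT R d, regret q1 q2 t = 0}.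
  apply: (Rintegral_ae_ge0_eq0 g_fin (bounded_measurable_regret qs1 qs2)) regret0.
  by apply: filterS graph => -[x z] [Ax D1z]; exact: regret_ge0.
pose B := \bigcup_N (A `&` [set x | 0 < gap_minorant q1 q2 N x]).
have mB : measurable (B : set (Bor R n)).
  apply: bigcupT_measurable => N.
  rewrite (_ : [set x | 0 < _] = gap_minorant q1 q2 N @^-1` `]0, +oo[%classic).
    exact: measurable_gap_minorant qs1 qs2 (Bor_measurable_compact cA) _ (measurable_itv _).
  by apply/seteqP; split => x /=; rewrite in_itv /= andbT.
exists B; split => //; last first.
  move=> x /= /existsNP [N /existsNP [Ax /negP]]; rewrite -ltNge => gapN.
  by exists N.
rewrite -marg //; apply/negligibleP; first exact: measurableX.
have graph0 : {ae g, forall t : Bor R n * ZT R d,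
    (A t.1 /\ maximizers q1 t.1 t.2) /\ regret q1 q2 t = 0}.
  exact: filterI graph regret_ae0.
apply: negligibleS graph0.
move=> [x z] [[N _ [Ax /= gapN]] _] [[_ D1z]]; have Zz : Zset Z0 z by case: D1z.
by rewrite regretE // => regret0'; have := gap_minorant_le N qs1 qs2 Ax D1z; lra.
Qed.

Lemma ae_maximizers_singleton_mem (mu : {measure set (Bor R n) -> \bar R}) q1 q2 :
  price_system Z0 q1 -> price_system Z0 q2 ->
  (forall B, measurable B -> g (B `*` setT) = mu B) ->
  {ae mu, forall x : Bor R n, A x} ->
  {ae g, forall t : Bor R n * ZT R d, A t.1 /\ maximizers q1 t.1 t.2} ->
  Rintegral g setT (regret q1 q2) = 0 ->
  {ae mu, forall (x : Bor R n) dd, maximizers q1 x = [set dd] -> maximizers q2 x dd}.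
Proof.
move=> qs1 qs2 marg A_ae graph regret0.
have gap_ae := ae_gap_minorant_le0 qs1 qs2 marg graph regret0.
(* the filter instance is not inferred for predicates built from sets of 'rV *)
apply: (filterS2 (F := almost_everywhere mu)) A_ae gap_ae => x Ax gap_le0 dd D1x.
apply: contrapT => D2dd.
have D1dd : maximizers q1 x dd by rewrite D1x.
have Zdd : Zset Z0 dd by case: D1dd.
have := gain_lt_indirect qs2 Ax Zdd D2dd; rewrite /gain => lt2.
have := maximizers_gain qs1 Ax D1dd; rewrite /gain => eq1.
have [|N] := gap_minorant_gt qs1 qs2 Ax D1x; first lra.
by rewrite ltNge gap_le0.
Qed.

End RegretIntegral.

End Envelope.

(** * Marginals, prices and the market *)

Section Marginals.
Context (R : realType) d1 d2 d3 (T1 : measurableType d1) (T2 : measurableType d2)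
  (T3 : measurableType d3).

Lemma Rintegral_fst_eq (g1 : {measure set (T1 * T2)%type -> \bar R})
    (g2 : {measure set (T1 * T3)%type -> \bar R}) (f : T1 -> R) :
  (g1 setT < +oo)%E -> (g2 setT < +oo)%E ->
  (forall B, measurable B -> g1 (B `*` setT) = g2 (B `*` setT)) -> bounded_measurable f ->
  Rintegral g1 setT (f \o fst) = Rintegral g2 setT (f \o fst).
Proof.
move=> g1_fin g2_fin g12.
apply: (Rintegral_pushforward_eq measurable_fst measurable_fst g1_fin g2_fin measurableT).
- by move=> B mB _; rewrite -!setXT; exact: g12.
- by move=> z /(_ I).
Qed.

Lemma Rintegral_snd_eq (g1 : {measure set (T1 * T3)%type -> \bar R})
    (g2 : {measure set (T2 * T3)%type -> \bar R}) (G : set T3) (f : T3 -> R) :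
  (g1 setT < +oo)%E -> (g2 setT < +oo)%E -> measurable G ->
  (forall C, measurable C -> C `<=` G -> g1 (setT `*` C) = g2 (setT `*` C)) ->
  (forall z, ~ G z -> f z = 0) -> bounded_measurable f ->
  Rintegral g1 setT (f \o snd) = Rintegral g2 setT (f \o snd).
Proof.
move=> g1_fin g2_fin mG g12.
apply: (Rintegral_pushforward_eq measurable_snd measurable_snd g1_fin g2_fin mG).
by move=> C mC CG; rewrite -!setTX; exact: g12.
Qed.

Lemma measure_lty_of_marginal (mu : {finite_measure set T1 -> \bar R})
    (g : {measure set (T1 * T2)%type -> \bar R}) :
  (forall B, measurable B -> g (B `*` setT) = mu B) -> (g setT < +oo)%E.
Proof.
move=> marg; rewrite -setXTT marg //.
by have := fin_num_measure mu setT measurableT; rewrite ge0_fin_numE.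
Qed.

End Marginals.

Lemma regular_near_continuous (R : realType) n m (A : set 'rV[R]_n) (Z0 : set 'rV[R]_m) f :
  regular_near A Z0 f -> forall x z, A x -> Z0 z ->
  {for (x, z), continuous (fun q : 'rV[R]_n * 'rV[R]_m => f q.1 q.2)}.
Proof. by case=> U [_ AZU f_cont _ _] x z Ax Zz; apply/f_cont/AZU. Qed.

Section Prices.
Variables (R : realType) (d : nat) (Z0 : set 'rV[R]_d).

Lemma price_systemN p : price_system Z0 p -> price_system Z0 (fun z => - p z).
Proof.
by case=> pd ps pc; split; rewrite ?pd ?ps ?oppr0 // => z; apply: cvgN; exact: pc.
Qed.

Lemma price_onN p : price_on Z0 (fun z => - p z) = fun z => - price_on Z0 p z.
Proof. by apply/funext => z; rewrite /price_on !patchE; case: ifPn; rewrite ?oppr0. Qed.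

Lemma supplyE n (v : 'rV[R]_n -> 'rV[R]_d -> R) p :
  supply Z0 v p = maximizers Z0 (fun y z0 => - v y z0) (-1) 0 (fun z => - p z).
Proof.
have vE y z : wZ (fun y z0 => - v y z0) (-1) 0 y z = - vZ v y z.
  by case: z => //=; rewrite oppr0.
apply/funext => y; apply/seteqP; split => z [Zz zmin]; split => // z' Zz';
  have := zmin z' Zz'; rewrite /gain !vE; lra.
Qed.

Lemma Rintegral_price_on_clearing d1 d2 (p : Zpt R d -> R)
    (al : {measure set (Bor R d1 * ZT R d)%type -> \bar R})
    (be : {measure set (Bor R d2 * ZT R d)%type -> \bar R}) :
  compact Z0 -> price_system Z0 p -> (al setT < +oo)%E -> (be setT < +oo)%E ->
  (forall B : set (Bor R d), measurable B -> B `<=` Z0 ->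
     al (setT `*` (Zgood @` B)) = be (setT `*` (Zgood @` B))) ->
  Rintegral al setT (price_on Z0 p \o snd) = Rintegral be setT (price_on Z0 p \o snd).
Proof.
move=> cZ [pd ps pc] al_fin be_fin clearing.
have mZ := measurable_image_Zgood (Bor_measurable_compact cZ).
apply: (Rintegral_snd_eq al_fin be_fin mZ).
- move=> C mC CZ; have -> : C = Zgood @` (Zgood @^-1` C).
    apply/seteqP; split => [z Cz|_ [z0 Cz0 <-] //].
    by have [z0 _ ez] := CZ z Cz; exists z0; rewrite /preimage /= ez.
  apply: clearing; first exact: measurable_preimage_Zgood.
  by move=> z0 Cz0; have [z1 Zz1 [<-]] := CZ _ Cz0.
- move=> [z0||] notZ; rewrite /price_on patchE; case: ifPn => // /set_mem Zz.
  by exfalso; apply: notZ; exists z0.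
- exact: bounded_measurable_price_on.
Qed.

End Prices.

Section Market.
Variables (R : realType) (d1 d2 d3 : nat).
Variables (X : set 'rV[R]_d1) (Y : set 'rV[R]_d2) (Z0 : set 'rV[R]_d3).
Variables (mu : {finite_measure set (Bor R d1) -> \bar R})
  (nu : {finite_measure set (Bor R d2) -> \bar R}).
Variables (u : 'rV[R]_d1 -> 'rV[R]_d3 -> R) (v : 'rV[R]_d2 -> 'rV[R]_d3 -> R).
Hypotheses (cX : compact X) (cY : compact Y) (cZ : compact Z0).
Hypothesis u_cont : forall x z, X x -> Z0 z ->
  {for (x, z), continuous (fun q : 'rV[R]_d1 * 'rV[R]_d3 => u q.1 q.2)}.
Hypothesis v_cont : forall y z, Y y -> Z0 z ->
  {for (y, z), continuous (fun q : 'rV[R]_d2 * 'rV[R]_d3 => v q.1 q.2)}.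

Let nv_cont y z : Y y -> Z0 z ->
  {for (y, z), continuous (fun q : 'rV[R]_d2 * 'rV[R]_d3 => - v q.1 q.2)}.
Proof. by move=> Yy Zz; apply: cvgN; exact: v_cont. Qed.

(* The supply side is the demand side for the utility -v at prices -p, with
   the reservation values of the two extra goods swapped. *)
Local Notation demand_regret p1 p2 := (regret X Z0 u 0 (-1) p1 p2).
Local Notation supply_regret p1 p2 :=
  (regret Y Z0 (fun y z0 => - v y z0) (-1) 0 (fun z => - p1 z) (fun z => - p2 z)).

Variables (p1 p2 : Zpt R d3 -> R).
Variables (alpha1 alpha2 : {measure set (Bor R d1 * ZT R d3)%type -> \bar R})
  (beta1 beta2 : {measure set (Bor R d2 * ZT R d3)%type -> \bar R}).
Hypothesis eq1 : equilibrium X Y Z0 mu nu u v p1 alpha1 beta1.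
Hypothesis eq2 : equilibrium X Y Z0 mu nu u v p2 alpha2 beta2.

Lemma demand_regret_ge0 q1 q2 al be : equilibrium X Y Z0 mu nu u v q1 al be ->
  price_system Z0 q2 -> 0 <= Rintegral al setT (demand_regret q1 q2).
Proof.
case=> [[qs1 _] [graph _] _ _] qs2.
exact: (Rintegral_regret_ge0 cX cZ u_cont qs1 qs2 graph).
Qed.

Lemma supply_regret_ge0 q1 q2 al be : equilibrium X Y Z0 mu nu u v q1 al be ->
  price_system Z0 q2 -> 0 <= Rintegral be setT (supply_regret q1 q2).
Proof.
case=> [[qs1 _] _ [graph _] _] qs2; rewrite supplyE in graph.
exact: (Rintegral_regret_ge0 cY cZ nv_cont (price_systemN qs1) (price_systemN qs2) graph).
Qed.

Lemma regret_sum_eq0 :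
  Rintegral alpha1 setT (demand_regret p1 p2) + Rintegral alpha2 setT (demand_regret p2 p1) +
  Rintegral beta1 setT (supply_regret p1 p2) + Rintegral beta2 setT (supply_regret p2 p1) = 0.
Proof.
case: eq1 => [[ps1 _] [_ ma1] [_ mb1] clear1].
case: eq2 => [[ps2 _] [_ ma2] [_ mb2] clear2].
have [a1 a2] := (measure_lty_of_marginal ma1, measure_lty_of_marginal ma2).
have [b1 b2] := (measure_lty_of_marginal mb1, measure_lty_of_marginal mb2).
have [ns1 ns2] := (price_systemN ps1, price_systemN ps2).
have a12 B : measurable B -> alpha1 (B `*` setT) = alpha2 (B `*` setT).
  by move=> mB; rewrite ma1 // ma2.
have b12 B : measurable B -> beta1 (B `*` setT) = beta2 (B `*` setT).
  by move=> mB; rewrite mb1 // mb2.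
rewrite !(Rintegral_regret _ _ cX cZ u_cont) // !(Rintegral_regret _ _ cY cZ nv_cont) //.
rewrite !(Rintegral_fst_eq a1 a2 a12 (bounded_measurable_indirect_on _ _ cX cZ u_cont _)) //.
rewrite !(Rintegral_fst_eq b1 b2 b12 (bounded_measurable_indirect_on _ _ cY cZ nv_cont _)) //.
rewrite !price_onN.
rewrite !(Rintegral_bounded_measurableN b1 (bounded_measurable_comp measurable_snd
  (bounded_measurable_price_on cZ _))) //.
rewrite !(Rintegral_bounded_measurableN b2 (bounded_measurable_comp measurable_snd
  (bounded_measurable_price_on cZ _))) //.
rewrite !(Rintegral_price_on_clearing cZ _ a1 b1 clear1) //.
rewrite !(Rintegral_price_on_clearing cZ _ a2 b2 clear2) //.
lra.
Qed.

Lemma demand_regret_eq0 : Rintegral alpha1 setT (demand_regret p1 p2) = 0.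
Proof.
have ps1 : price_system Z0 p1 by case: eq1 => [[]].
have ps2 : price_system Z0 p2 by case: eq2 => [[]].
have := demand_regret_ge0 eq1 ps2; have := demand_regret_ge0 eq2 ps1.
have := supply_regret_ge0 eq1 ps2; have := supply_regret_ge0 eq2 ps1.
have := regret_sum_eq0; lra.
Qed.

End Market.

Unset Implicit Arguments.

Theorem mainTheorem4 (R : realType) (d1 d2 d3 : nat)
  (X : set 'rV[R]_d1) (Y : set 'rV[R]_d2) (Z0 : set 'rV[R]_d3)
  (mu : {finite_measure set (Bor R d1) -> \bar R})
  (nu : {finite_measure set (Bor R d2) -> \bar R})
  (u : 'rV[R]_d1 -> 'rV[R]_d3 -> R) (v : 'rV[R]_d2 -> 'rV[R]_d3 -> R) :
  compact X -> compact Y -> compact Z0 ->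
  X !=set0 -> Y !=set0 ->
  mu (~` X) = 0%E -> nu (~` Y) = 0%E ->
  regular_near X Z0 u -> regular_near Y Z0 v ->
  forall (p1 p2 : Zpt R d3 -> R)
    (alpha1 alpha2 : {measure set (Bor R d1 * ZT R d3)%type -> \bar R})
    (beta1 beta2 : {measure set (Bor R d2 * ZT R d3)%type -> \bar R}),
  equilibrium X Y Z0 mu nu u v p1 alpha1 beta1 ->
  equilibrium X Y Z0 mu nu u v p2 alpha2 beta2 ->
  {ae mu, forall x : Bor R d1,
     forall dx1 : Zpt R d3, demand Z0 u p1 x = [set dx1] ->
       demand Z0 u p2 x dx1 /\
       (forall dx2 : Zpt R d3, demand Z0 u p2 x = [set dx2] -> dx1 = dx2)}.
Proof.
move=> cX cY cZ _ _ muX _ ureg vreg p1 p2 al1 al2 be1 be2 eq1 eq2.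
have u_cont := regular_near_continuous ureg.
have v_cont := regular_near_continuous vreg.
have regret0 := demand_regret_eq0 cX cY cZ u_cont v_cont eq1 eq2.
case: (eq1) (eq2) => [[ps1 _] [graph marg] _ _] [[ps2 _] _ _ _].
have X_ae : {ae mu, forall x : Bor R d1, X x}.
  by exists (~` X); split => //; apply: measurableC; exact: Bor_measurable_compact.
have := ae_maximizers_singleton_mem cX cZ u_cont (measure_lty_of_marginal marg)
  ps1 ps2 marg X_ae graph regret0.
apply: (filterS (F := almost_everywhere mu)) => x D12 dx1 D1x.
have D2dx1 : demand Z0 u p2 x dx1 := D12 _ D1x.
by split => // dx2 D2x; move: D2dx1; rewrite D2x.
Qed.
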